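(* Let $n\ge 2$, let $\mathbb{F}_q$ be a finite field with $q$ elements, let $UU_n(\mathbb{F}_q)$ be the group of $n\times n$ upper triangular unipotent matrices over $\mathbb{F}_q$, and let \[S_0=\{A=(a_{ij})\in UU_n(\mathbb{F}_q): \textstyle\prod_{i=1}^{n-1}a_{i,i+1}\neq 0\}.\] Then $\omega(S_0)=(q-1)^{n-2}q^{\binom{n-2}{2}}$.
   Context: A subset $N$ of a group is non-commuting if $xy\ne yx$ for all distinct $x,y\in N$; for a subset $S$ of a group, $\omega(S)$ is the maximum cardinality of a non-commuting subset of $S$. *)

From mathcomp Require Import all_boot all_order all_algebra.
Set Implicit Arguments. Unset Strict Implicit. Unset Printing Implicit Defensive.
Import GRing.Theory.
Local Open Scope ring_scope.

Definition unitriangular (F : finFieldType) (n : nat) (A : 'M[F]_n) : bool :=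
  [forall i : 'I_n, forall j : 'I_n,
     ((j < i)%N ==> (A i j == 0)) && ((i == j) ==> (A i j == 1))].

Definition UU (F : finFieldType) (n : nat) : {set 'M[F]_n} :=
  [set A | unitriangular A].

Definition S0 (F : finFieldType) (n : nat) : {set 'M[F]_n} :=
  [set A in UU F n |
     [forall i : 'I_n, forall j : 'I_n, (j == i.+1 :> nat) ==> (A i j != 0)]].

Definition noncommuting (F : finFieldType) (n : nat) (N : {set 'M[F]_n}) : bool :=
  [forall x in N, forall y in N, (x != y) ==> (x *m y != y *m x)].

Definition omega (F : finFieldType) (n : nat) (S : {set 'M[F]_n}) : nat :=
  \max_(N : {set 'M[F]_n} | (N \subset S) && noncommuting N) #|N|.

From mathcomp Require Import all_boot all_order all_algebra zify.
Set Implicit Arguments. Unset Strict Implicit. Unset Printing Implicit Defensive.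
Import GRing.Theory.

(* For A in S0 the matrix N := A - 1 is strictly upper triangular with nonzero
   superdiagonal, so the first row of N^k vanishes before column k and is nonzero there.
   Hence the first rows of 1, N, ..., N^(n-1) are independent, a matrix commuting with N
   is the polynomial in N with the same first row, and commuting with N is transitive.
   Each A in S0 thus commutes with exactly one element of S0 with first row
   (1, 1, 0, ..., 0); elements sharing this representative commute, while distinct
   representatives do not, so omega(S0) is the number of representatives.  In them the
   superdiagonal entries of rows 2, ..., n-1 are arbitrary nonzero and the entries above
   them outside the first row are arbitrary, giving (q-1)^(n-2) q^C(n-2,2). *)


Lemma commr_subr1 (R : pzRingType) (a b : R) : GRing.comm (a - 1) b <-> GRing.comm a b.
Proof.
rewrite /GRing.comm mulrBl mulrBr mul1r mulr1; split => [/addIr|->] //.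
Qed.

Lemma sum_ord_eq k p : \sum_(j < k) (j == p :> nat) = (p < k).
Proof. by elim: k => [|k IHk]; rewrite ?big_ord0 // big_ord_recr /= IHk; lia. Qed.
Lemma sum_ord_gt k p : \sum_(j < k) (p < j) = k - p.+1.
Proof. by elim: k => [|k IHk]; rewrite ?big_ord0 // big_ord_recr /= IHk; lia. Qed.
Lemma sum_ord_lt k p : \sum_(j < k) (j < p) = minn p k.
Proof. by elim: k => [|k IHk]; rewrite ?big_ord0 ?minn0 // big_ord_recr /= IHk; lia. Qed.

Lemma count_superdiag m :
  \sum_(ij : 'I_m.+2 * 'I_m.+2) ((0 < ij.1) && (ij.2 == ij.1.+1 :> nat)) = m.
Proof.
rewrite -(pair_bigA _ (fun i j : 'I_m.+2 => ((0 < i) && (j == i.+1 :> nat)) : nat)) /=.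
rewrite big_ord_recl big1 // add0n.
under eq_bigr do rewrite sum_ord_eq ltnS.
by rewrite sum_ord_lt; lia.
Qed.

Lemma count_above_superdiag m :
  \sum_(ij : 'I_m.+2 * 'I_m.+2) ((0 < ij.1) && (ij.1.+1 < ij.2)) = 'C(m, 2).
Proof.
rewrite -(pair_bigA _ (fun i j : 'I_m.+2 => ((0 < i) && (i.+1 < j)) : nat)) /=.
rewrite big_ord_recl big1 // add0n.
under eq_bigr do rewrite sum_ord_gt.
rewrite (reindex_inj rev_ord_inj) big_ord_recl /= -bin2_sum big_mkord.
rewrite /bump /=; have -> : m.+2 - (m - 0).+3 = 0 by lia.
by apply: eq_bigr => i _; have := ltn_ord i; rewrite /bump /=; lia.
Qed.

Local Open Scope ring_scope.

Lemma card_mx_entries (R : finType) m n (P : 'I_m * 'I_n -> {set R}) :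
  #|[set A : 'M[R]_(m, n) | [forall ij, A ij.1 ij.2 \in P ij]]| = \prod_ij #|P ij|.
Proof.
pose mx_of (g : {ffun 'I_m * 'I_n -> R}) := \matrix_(i, j) g (i, j).
have mx_of_inj : injective mx_of.
  by move=> g h /matrixP gh; apply/ffunP => -[i j]; have := gh i j; rewrite !mxE.
have -> : [set A : 'M[R]_(m, n) | [forall ij, A ij.1 ij.2 \in P ij]] =
          mx_of @: [set g in family P].
  apply/setP => A; rewrite inE; apply/forallP/imsetP => [A_P | [g]].
    exists [ffun ij => A ij.1 ij.2]; last by apply/matrixP => i j; rewrite !mxE ffunE.
    by rewrite inE; apply/familyP => ij; rewrite ffunE.
  by rewrite inE => /familyP g_P -> [i j]; rewrite mxE.
by rewrite card_imset // cardsE card_family foldrE big_image.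
Qed.

Section RegularNilpotent.
Variables (F : fieldType) (n : nat).
Implicit Types (N X Y : 'M[F]_n.+1) (r : 'rV[F]_n.+1) (c : 'cV[F]_n.+1).

Definition regular_nil N :=
  (forall i j : 'I_n.+1, (j <= i)%N -> N i j = 0) /\
  (forall i j : 'I_n.+1, j = i.+1 :> nat -> N i j != 0).

Definition pow_comb N c : 'M[F]_n.+1 := \sum_(k < n.+1) c k 0 *: N ^+ k.

Definition pow_row0_mx N : 'M[F]_n.+1 := \matrix_(j, k) (N ^+ k) 0 j.

Definition centr_of_row0 N r := pow_comb N (invmx (pow_row0_mx N) *m r^T).

Lemma pow_comb_comm N c : GRing.comm N (pow_comb N c).
Proof.
apply: commr_sum => k _.
by rewrite /GRing.comm -scalerAr -scalerAl -exprS -exprSr.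
Qed.

Lemma pow_comb_row0 N c j : pow_comb N c 0 j = (pow_row0_mx N *m c) j 0.
Proof. by rewrite summxE !mxE; apply: eq_bigr => k _; rewrite !mxE mulrC. Qed.

Section Regular.
Variable N : 'M[F]_n.+1.
Hypothesis N_reg : regular_nil N.

Lemma regular_nil_exp_eq0 (k : nat) (i j : 'I_n.+1) : (j < i + k)%N -> (N ^+ k) i j = 0.
Proof.
have [N_lower _] := N_reg.
elim: k j => [|k IHk] j lt_j_ik.
  rewrite addn0 in lt_j_ik; rewrite expr0 -idmxE mxE.
  by have /negbTE -> : i != j by apply: contraTneq lt_j_ik => ->; rewrite ltnn.
rewrite exprSr -mulmxE mxE big1 // => l _.
have [lt_l_ik | le_ik_l] := ltnP l (i + k); first by rewrite IHk ?mul0r.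
by rewrite N_lower ?mulr0 //; apply: leq_trans le_ik_l; rewrite -ltnS -addnS.
Qed.

Lemma regular_nil_exp_neq0 (k : nat) (i j : 'I_n.+1) :
  j = (i + k)%N :> nat -> (N ^+ k) i j != 0.
Proof.
have [N_lower N_super] := N_reg.
elim: k j => [|k IHk] j j_ik.
  by rewrite addn0 in j_ik; rewrite expr0 -idmxE mxE (val_inj j_ik) eqxx oner_neq0.
have lt_ik : (i + k < n.+1)%N by rewrite (leq_trans _ (ltn_ord j)) // j_ik addnS.
rewrite exprSr -mulmxE mxE (bigD1 (Ordinal lt_ik)) //= big1 ?addr0.
  by rewrite mulf_neq0 ?IHk ?N_super // j_ik addnS.
move=> l /eqP ne_l_ik; have [lt_l_ik | gt_l_ik | eq_l_ik] := ltngtP l (i + k).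
- by rewrite regular_nil_exp_eq0 ?mul0r.
- by rewrite N_lower ?mulr0 // j_ik addnS.
- by case: ne_l_ik; apply: val_inj.
Qed.

Lemma pow_row0_mx_unit : pow_row0_mx N \in unitmx.
Proof.
rewrite unitmxE unitfE det_trig.
  by apply/prodf_neq0 => j _; rewrite mxE regular_nil_exp_neq0.
by apply/is_trig_mxP => j k lt_jk; rewrite mxE regular_nil_exp_eq0.
Qed.

Lemma row0_centr_of_row0 r : row 0 (centr_of_row0 N r) = r.
Proof.
apply/rowP => j; rewrite mxE pow_comb_row0 mulKVmx ?pow_row0_mx_unit //.
by rewrite mxE.
Qed.

(* A matrix commuting with [N] is determined by its first row: comparing row 0
   of [N ^+ k * Z] and [Z * N ^+ k] isolates row [k] of [Z] given the rows below. *)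
Lemma regular_nil_comm_row0_inj X Y :
  GRing.comm N X -> GRing.comm N Y -> row 0 X = row 0 Y -> X = Y.
Proof.
move=> NX NY XY0; apply/eqP; rewrite -subr_eq0; apply/eqP.
set Z := X - Y; have NZ : GRing.comm N Z by apply: commrB.
have Z0 j : Z 0 j = 0 by move/rowP/(_ j): XY0; rewrite !mxE => ->; rewrite subrr.
clearbody Z; suff rowZ t (k : 'I_n.+1) : (n < k + t)%N -> row k Z = 0.
  by apply/row_matrixP => k; rewrite row0 (rowZ n.+1) //; lia.
elim: t k => [|t IHt] k lt_n_kt; first by have := ltn_ord k; lia.
apply/rowP => l; rewrite !mxE.
have : (N ^+ k * Z) 0 l = 0.
  by rewrite -(commrX k (commr_sym NZ)) -mulmxE mxE big1 // => j _; rewrite Z0 mul0r.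
rewrite -mulmxE mxE (bigD1 k) //= big1 ?addr0.
  by move/eqP; rewrite mulf_eq0 (negbTE (regular_nil_exp_neq0 _)) //= => /eqP.
move=> j /eqP ne_jk; have [lt_jk | gt_jk | eq_jk] := ltngtP j k.
- by rewrite regular_nil_exp_eq0 ?mul0r.
- have lt_n_jt : (n < j + t)%N by lia.
  have /rowP/(_ l) := IHt j lt_n_jt.
  by rewrite !mxE => ->; rewrite mulr0.
- by case: ne_jk; apply: val_inj.
Qed.

Lemma regular_nil_centralizer X : GRing.comm N X -> X = centr_of_row0 N (row 0 X).
Proof.
move=> NX; apply: regular_nil_comm_row0_inj => //; first exact: pow_comb_comm.
by rewrite row0_centr_of_row0.
Qed.

Lemma regular_nil_comm_trans X Y : GRing.comm N X -> GRing.comm N Y -> GRing.comm X Y.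
Proof.
move=> NX /regular_nil_centralizer ->; apply: commr_sum => k _.
by apply: commr_sym; rewrite /GRing.comm -scalerAl -scalerAr (commrX k (commr_sym NX)).
Qed.

Lemma pow_comb_lower c (i j : 'I_n.+1) : (j < i)%N -> pow_comb N c i j = 0.
Proof.
move=> lt_ji; rewrite summxE big1 // => k _.
by rewrite mxE regular_nil_exp_eq0 ?mulr0 // (leq_trans lt_ji (leq_addr _ _)).
Qed.

Lemma pow_comb_diag c (i : 'I_n.+1) : pow_comb N c i i = c 0 0.
Proof.
rewrite summxE big_ord_recl big1 ?addr0 => [|k _].
  by rewrite mxE expr0 -idmxE mxE eqxx mulr1.
by rewrite mxE regular_nil_exp_eq0 ?mulr0 // addnS ltnS leq_addr.
Qed.

End Regular.
End RegularNilpotent.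

Lemma pow_comb_superdiag (F : fieldType) n (N : 'M[F]_n.+2) c (i j : 'I_n.+2) :
  regular_nil N ->
  j = i.+1 :> nat -> pow_comb N c i j = c (lift 0 0) 0 * N i j.
Proof.
move=> N_reg j_i1; have ne_ij : i != j by rewrite -val_eqE /= j_i1 ltn_eqF.
rewrite summxE 2!big_ord_recl big1 ?addr0 => [|k _].
  by rewrite !mxE /= expr1 (negbTE ne_ij) mulr0 add0r.
by rewrite mxE regular_nil_exp_eq0 ?mulr0 //= j_i1 /bump /= !addSn !addnS ltnS leq_addr.
Qed.

Lemma S0P (F : finFieldType) n (A : 'M[F]_n) :
  reflect [/\ forall i j : 'I_n, (j < i)%N -> A i j = 0,
              forall i, A i i = 1 &
              forall i j : 'I_n, j = i.+1 :> nat -> A i j != 0]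
          (A \in S0 F n).
Proof.
rewrite !inE; apply: (iffP andP) =>
  [[/forallP A_unitri /forallP A_super] | [A_lower A_diag A_super]].
  split=> [i j lt_ji | i | i j j_i1].
  - by have /forallP/(_ j)/andP[/implyP/(_ lt_ji)/eqP] := A_unitri i.
  - by have /forallP/(_ i)/andP[_ /implyP/(_ (eqxx _))/eqP] := A_unitri i.
  - by have /forallP/(_ j)/implyP := A_super i; apply; apply/eqP.
split; apply/forallP => i; apply/forallP => j.
  apply/andP; split; apply/implyP; first by move/A_lower ->.
  by move/eqP <-; rewrite A_diag.
by apply/implyP => /eqP; apply: A_super.
Qed.

Lemma regular_nil_S0 (F : finFieldType) n (A : 'M[F]_n.+1) :
  A \in S0 F n.+1 -> regular_nil (A - 1).
Proof.
move/S0P => [A_lower A_diag A_super]; split=> i j; rewrite !mxE.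
  rewrite leq_eqVlt => /orP[/eqP/val_inj -> | lt_ji]; first by rewrite A_diag eqxx subrr.
  by rewrite A_lower // eq_sym -val_eqE /= ltn_eqF // subr0.
move=> j_i1; have -> : (i == j) = false by rewrite -val_eqE /= j_i1 ltn_eqF.
by rewrite subr0 A_super.
Qed.

Lemma noncommutingP (F : finFieldType) n (N : {set 'M[F]_n}) :
  reflect {in N &, forall x y, GRing.comm x y -> x = y} (noncommuting N).
Proof.
apply: (iffP forallP) => [N_nc x y Nx Ny xy | N_comm x].
  apply/eqP/negPn/negP => ne_xy.
  move: (N_nc x) => /implyP/(_ Nx)/forall_inP/(_ y Ny)/implyP/(_ ne_xy).
  by rewrite mulmxE xy eqxx.
apply/implyP => Nx; apply/forall_inP => y Ny; apply/implyP.
by apply: contraNN => /eqP xy; apply/eqP/N_comm.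
Qed.

Section Representatives.
Variables (F : finFieldType) (m : nat).
Local Notation n := m.+2.
Implicit Types (A : 'M[F]_n) (S : {set 'M[F]_n}).

Definition row_e01 : 'rV[F]_n := \row_(j < n) ((j <= 1)%N)%:R.

Definition S0_reps : {set 'M[F]_n} := [set A in S0 F n | row 0 A == row_e01].

Definition S0_rep A := centr_of_row0 (A - 1) row_e01.

Lemma S0_reps_sub : S0_reps \subset S0 F n.
Proof. by apply/subsetP => A; rewrite inE => /andP[]. Qed.

Lemma commr_S0_rep A : GRing.comm A (S0_rep A).
Proof. exact/commr_subr1/pow_comb_comm. Qed.

Lemma S0_rep_in_reps A : A \in S0 F n -> S0_rep A \in S0_reps.
Proof.
move=> S0A; have N_reg := regular_nil_S0 S0A.
have row0_rep : row 0 (S0_rep A) = row_e01 by apply: row0_centr_of_row0.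
rewrite inE row0_rep eqxx andbT.
have rep_row0 j : S0_rep A 0 j = ((j <= 1)%N)%:R by move/rowP/(_ j): row0_rep; rewrite !mxE.
rewrite /S0_rep /centr_of_row0 in rep_row0 *; set c := (invmx _ *m _) in rep_row0 *.
have c0 : c 0 0 = 1 by rewrite -(pow_comb_diag N_reg c 0) rep_row0.
have c1 : c (lift 0 0) 0 != 0.
  apply: contra_eq_neq (rep_row0 (lift 0 0)) => c1_0.
  by rewrite (pow_comb_superdiag _ N_reg) // c1_0 mul0r eq_sym oner_neq0.
apply/S0P; split=> [i j /(pow_comb_lower N_reg) -> // | i | i j j_i1].
  by rewrite pow_comb_diag.
by rewrite (pow_comb_superdiag _ N_reg j_i1) mulf_neq0 // (proj2 N_reg).
Qed.

Lemma noncommuting_S0_reps : noncommuting S0_reps.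
Proof.
apply/noncommutingP => x y x_rep y_rep xy.
have S0x := subsetP S0_reps_sub x x_rep.
apply: (regular_nil_comm_row0_inj (regular_nil_S0 S0x)); try exact/commr_subr1.
by move: x_rep y_rep; rewrite !inE => /andP[_ /eqP ->] /andP[_ /eqP ->].
Qed.

(* Elements of [S0] with the same representative commute with it, hence with each other. *)
Lemma noncommuting_S0_card_le S :
  S \subset S0 F n -> noncommuting S -> (#|S| <= #|S0_reps|)%N.
Proof.
move=> S_S0 /noncommutingP S_nc; rewrite -(card_in_imset (f := S0_rep)).
  apply/subset_leq_card/subsetP => _ /imsetP[x Sx ->].
  exact/S0_rep_in_reps/(subsetP S_S0).
move=> x y Sx Sy rep_xy; apply: S_nc => //.
have S0r := subsetP S0_reps_sub _ (S0_rep_in_reps (subsetP S_S0 x Sx)).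
apply: (regular_nil_comm_trans (regular_nil_S0 S0r)); apply/commr_subr1/commr_sym.
  exact: commr_S0_rep.
by rewrite rep_xy; apply: commr_S0_rep.
Qed.

Lemma omega_S0E : omega (S0 F n) = #|S0_reps|.
Proof.
apply/eqP; rewrite eqn_leq; apply/andP; split.
  by apply/bigmax_leqP => S /andP[]; apply: noncommuting_S0_card_le.
by apply: (leq_bigmax_cond (F := fun S => #|S|)); rewrite S0_reps_sub noncommuting_S0_reps.
Qed.

Definition S0_rep_entries (ij : 'I_n * 'I_n) : {set F} :=
  let: (i, j) := ij in
  if (j <= i)%N then [set (i == j)%:R]
  else if i == 0 :> nat then [set ((j <= 1)%N)%:R]
  else if j == i.+1 :> nat then [set~ 0] else setT.

Lemma S0_repsE :
  S0_reps = [set A : 'M[F]_n | [forall ij, A ij.1 ij.2 \in S0_rep_entries ij]].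
Proof.
apply/setP => A; rewrite inE [in RHS]inE.
apply/andP/forallP => [[S0A /eqP A_row0] [i j] | A_in].
  have [A_lower A_diag A_super] := S0P _ S0A.
  have A0 k : A 0 k = ((k <= 1)%N)%:R by move/rowP/(_ k): A_row0; rewrite !mxE.
  rewrite /=; case: (ltngtP i j) => [_ | lt_ji | /val_inj <-].
  - case: eqP => [i0 | _].
      by rewrite (_ : i = 0) ?A0 ?inE //; apply: val_inj.
    by case: eqP => [j_i1 | _]; rewrite !inE // A_super.
  - by rewrite inE A_lower // -val_eqE /= gtn_eqF.
  - by rewrite inE A_diag eqxx.
have A_at i j : A i j \in S0_rep_entries (i, j) := A_in (i, j).
split; [apply/S0P; split=> [i j lt_ji | i | i j j_i1] | apply/eqP/rowP => k].
- by have := A_at i j; rewrite /= ltnW // inE -val_eqE /= gtn_eqF // => /eqP.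
- by have := A_at i i; rewrite /= leqnn eqxx inE => /eqP.
- have := A_at i j; rewrite /= j_i1 ltnn eqxx; case: eqP => [-> | _] /=; rewrite !inE //.
  by move=> /eqP ->; apply: oner_neq0.
- have := A_at 0 k; rewrite !mxE /=; case: leqP => [k0 | k_pos]; rewrite inE => /eqP -> //.
  by rewrite (_ : k = 0) //; apply/val_inj/eqP; rewrite -leqn0.
Qed.

Lemma card_S0_rep_entries (ij : 'I_n * 'I_n) :
  #|S0_rep_entries ij| =
    ((#|F| - 1) ^ ((0 < ij.1)%N && (ij.2 == ij.1.+1 :> nat)) *
     #|F| ^ ((0 < ij.1) && (ij.1.+1 < ij.2))%N)%N.
Proof.
case: ij => i j /=; case: (leqP j i) => [le_ji | lt_ij].
  have -> : (j == i.+1 :> nat) = false by lia.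
  have -> : (i.+1 < j)%N = false by lia.
  by rewrite cards1 !andbF.
case: posnP => [-> | i_pos] /=; first by rewrite cards1.
case: eqP => [j_i1 | ne_j_i1] /=.
  have -> : (i.+1 < j)%N = false by lia.
  by rewrite cardsC1 muln1 subn1.
have -> : (i.+1 < j)%N by lia.
by rewrite cardsT mul1n.
Qed.

Lemma card_S0_reps : #|S0_reps| = ((#|F| - 1) ^ m * #|F| ^ 'C(m, 2))%N.
Proof.
rewrite S0_repsE card_mx_entries (eq_bigr _ (fun ij _ => card_S0_rep_entries ij)).
by rewrite big_split /= -!expn_sum count_superdiag count_above_superdiag.
Qed.

End Representatives.

Theorem theorem3p5 (F : finFieldType) (n : nat) (hn : (2 <= n)%N) :
  omega (S0 F n) = ((#|F| - 1) ^ (n - 2) * #|F| ^ 'C(n - 2, 2))%N.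
Proof.
case: n hn => [|[|m]] // _.
by rewrite omega_S0E card_S0_reps subn2.
Qed.
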